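(* Let $\mathcal L>0$, $m_\pm>0$, $\rho_\pm>0$, $S_+<0<S_-$, $S_I\in\mathbb R$, $\lambda_\pm=\sqrt{\rho_\pm/m_\pm}$, and define \[ \mathcal H_1^{\rm p}(q_1,q_2)=\tfrac12\Big(-\tfrac{S_+}{\rho_+}m_+\lambda_+\tanh\big(\lambda_+\tfrac{q_2-q_1}{2}\big)-\tfrac{S_-}{\rho_-}m_-\lambda_-\tanh(\lambda_-q_1)-S_I\Big), \] \[ \mathcal H_2^{\rm p}(q_1,q_2)=\tfrac12\Big(\tfrac{S_+}{\rho_+}m_+\lambda_+\tanh\big(\lambda_+\tfrac{q_2-q_1}{2}\big)+\tfrac{S_-}{\rho_-}m_-\lambda_-\tanh(\lambda_-(\mathcal L-q_2))+S_I\Big). \] Then the ODE system $\dot q_1=\mathcal H_1^{\rm p}(q_1,q_2)$, $\dot q_2=\mathcal H_2^{\rm p}(q_1,q_2)$ is the gradient flow of the function \[ \mathcal E(q_1,q_2)=\frac{\frac{S_-}{\rho_-}m_-}{2}\ln\cosh(\lambda_-q_1)+\frac{\frac{S_-}{\rho_-}m_-}{2}\ln\cosh(\lambda_-(\mathcal L-q_2))-\frac{S_+}{\rho_+}m_+\ln\cosh\Big(\lambda_+\frac{q_2-q_1}{2}\Big)+\frac12S_I(q_1-q_2), \] i.e. $(\mathcal H_1^{\rm p},\mathcal H_2^{\rm p})=-\nabla\mathcal E$, and $\mathcal E$ is a strictly convex Lyapunov function for the system. *)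

From Stdlib Require Import Reals Lra.
From Coquelicot Require Import Coquelicot.
Open Scope R_scope.

Definition lam (rho m : R) : R := sqrt (rho / m).

Definition H1p (L mp mm rhop rhom Sp Sm SI : R) (q1 q2 : R) : R :=
  / 2 * ( - (Sp / rhop) * mp * lam rhop mp * tanh (lam rhop mp * ((q2 - q1) / 2))
          - (Sm / rhom) * mm * lam rhom mm * tanh (lam rhom mm * q1)
          - SI ).

Definition H2p (L mp mm rhop rhom Sp Sm SI : R) (q1 q2 : R) : R :=
  / 2 * ( (Sp / rhop) * mp * lam rhop mp * tanh (lam rhop mp * ((q2 - q1) / 2))
          + (Sm / rhom) * mm * lam rhom mm * tanh (lam rhom mm * (L - q2))
          + SI ).

Definition Ep (L mp mm rhop rhom Sp Sm SI : R) (q1 q2 : R) : R :=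
  (Sm / rhom * mm) / 2 * ln (cosh (lam rhom mm * q1))
  + (Sm / rhom * mm) / 2 * ln (cosh (lam rhom mm * (L - q2)))
  - (Sp / rhop) * mp * ln (cosh (lam rhop mp * ((q2 - q1) / 2)))
  + / 2 * SI * (q1 - q2).

Definition strictly_convex2 (f : R -> R -> R) : Prop :=
  forall (x1 x2 y1 y2 t : R), (x1, x2) <> (y1, y2) -> 0 < t < 1 ->
    f (t * x1 + (1 - t) * y1) (t * x2 + (1 - t) * y2)
      < t * f x1 x2 + (1 - t) * f y1 y2.

From Stdlib Require Import Reals Lra.
From Coquelicot Require Import Coquelicot.
Open Scope R_scope.

(* [ln cosh] has the strictly increasing derivative [tanh], so it is strictly convex.  E is a
   nonnegative combination of [ln cosh] composed with affine forms, plus an affine term; the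
   terms in [q1] and in [L - q2] have positive weight, which makes E strictly convex in each
   coordinate separately and hence jointly.  Differentiating E along an arbitrary path gives
   [dE = - H1 dq1 - H2 dq2], i.e. [(H1, H2) = - grad E], so along a solution
   [dE/dt = - (H1^2 + H2^2) <= 0]. *)

Definition convex (f : R -> R) : Prop :=
  forall x y t, 0 < t < 1 -> f (t * x + (1 - t) * y) <= t * f x + (1 - t) * f y.

Definition strictly_convex (f : R -> R) : Prop :=
  forall x y t, x <> y -> 0 < t < 1 ->
    f (t * x + (1 - t) * y) < t * f x + (1 - t) * f y.

Definition convex2 (f : R -> R -> R) : Prop :=
  forall x1 x2 y1 y2 t, 0 < t < 1 ->
    f (t * x1 + (1 - t) * y1) (t * x2 + (1 - t) * y2)
      <= t * f x1 x2 + (1 - t) * f y1 y2.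

Definition affine (u : R -> R) : Prop :=
  forall x y t, u (t * x + (1 - t) * y) = t * u x + (1 - t) * u y.

Definition affine2 (h : R -> R -> R) : Prop :=
  forall x1 x2 y1 y2 t,
    h (t * x1 + (1 - t) * y1) (t * x2 + (1 - t) * y2) = t * h x1 x2 + (1 - t) * h y1 y2.

Lemma strictly_convex_convex f : strictly_convex f -> convex f.
Proof.
  intros hf x y t ht.
  destruct (Req_dec x y) as [<- | hxy].
  - replace (t * x + (1 - t) * x) with x by ring. lra.
  - left. now apply hf.
Qed.

Lemma strictly_convex_of_lt f :
  (forall x y t, x < y -> 0 < t < 1 -> f (t * x + (1 - t) * y) < t * f x + (1 - t) * f y) ->
  strictly_convex f.
Proof.
  intros hf x y t hxy ht.
  destruct (Rlt_or_le x y) as [hlt | hle]; [now apply hf |].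
  assert (hyx : y < x) by lra.
  pose proof (hf y x (1 - t) hyx ltac:(lra)) as h.
  replace ((1 - t) * y + (1 - (1 - t)) * x) with (t * x + (1 - t) * y) in h by ring.
  lra.
Qed.

Lemma MVT_is_derive f df a b : (forall x, is_derive f x (df x)) -> a < b ->
  exists c, a < c < b /\ f b - f a = df c * (b - a).
Proof.
  intros hf hab.
  destruct (MVT_cor2 f df a b hab) as [c [e hc]].
  - intros c _. apply is_derive_Reals, hf.
  - now exists c.
Qed.

Lemma strictly_convex_of_derive_increasing f df :
  (forall x, is_derive f x (df x)) -> (forall x y, x < y -> df x < df y) ->
  strictly_convex f.
Proof.
  intros hf hdf. apply strictly_convex_of_lt. intros x y t hxy ht.
  set (z := t * x + (1 - t) * y).
  destruct (MVT_is_derive f df x z hf ltac:(unfold z; nra)) as [c1 [hc1 e1]].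
  destruct (MVT_is_derive f df z y hf ltac:(unfold z; nra)) as [c2 [hc2 e2]].
  (* weighted by [t] and [1 - t], both MVT increments carry the factor [t (1 - t) (y - x)] *)
  replace (z - x) with ((1 - t) * (y - x)) in e1 by (unfold z; ring).
  replace (y - z) with (t * (y - x)) in e2 by (unfold z; ring).
  assert (hc : df c1 < df c2) by (apply hdf; lra).
  assert (hw : 0 < t * (1 - t) * (y - x)) by (apply Rmult_lt_0_compat; nra).
  assert (t * (f z - f x) < (1 - t) * (f y - f z)).
  { rewrite e1, e2.
    replace (t * (df c1 * ((1 - t) * (y - x)))) with (df c1 * (t * (1 - t) * (y - x))) by ring.
    replace ((1 - t) * (df c2 * (t * (y - x)))) with (df c2 * (t * (1 - t) * (y - x))) by ring.
    now apply Rmult_lt_compat_r. }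
  lra.
Qed.

Lemma cosh_pos x : 0 < cosh x.
Proof. unfold cosh. generalize (exp_pos x) (exp_pos (- x)). lra. Qed.

Lemma sinh_sub x y : sinh (x - y) = sinh x * cosh y - cosh x * sinh y.
Proof.
  unfold sinh, cosh.
  replace (x - y) with (x + - y) by ring.
  replace (- (x + - y)) with (- x + y) by ring.
  rewrite !exp_plus. field.
Qed.

Lemma tanh_increasing x y : x < y -> tanh x < tanh y.
Proof.
  intros hxy. unfold tanh.
  pose proof (cosh_pos x) as hx. pose proof (cosh_pos y) as hy.
  assert (hs : 0 < sinh (y - x)) by (rewrite <- sinh_0; apply sinh_lt; lra).
  rewrite sinh_sub in hs.
  apply Rlt_0_minus.
  replace (sinh y / cosh y - sinh x / cosh x)
    with ((sinh y * cosh x - cosh y * sinh x) / (cosh x * cosh y)) by (field; lra).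
  apply Rdiv_lt_0_compat; nra.
Qed.

Lemma is_derive_ln_cosh x : is_derive (fun x => ln (cosh x)) x (tanh x).
Proof.
  auto_derive; [apply cosh_pos |].
  unfold tanh. field. apply Rgt_not_eq, cosh_pos.
Qed.

Lemma strictly_convex_ln_cosh : strictly_convex (fun x => ln (cosh x)).
Proof.
  exact (strictly_convex_of_derive_increasing _ tanh is_derive_ln_cosh tanh_increasing).
Qed.

Lemma strictly_convex_scal_comp f u c :
  strictly_convex f -> 0 < c -> affine u -> (forall x y, u x = u y -> x = y) ->
  strictly_convex (fun x => c * f (u x)).
Proof.
  intros hf hc hu hinj x y t hxy ht. rewrite hu.
  assert (h : f (t * u x + (1 - t) * u y) < t * f (u x) + (1 - t) * f (u y)).
  { apply hf; [intro e; apply hxy, hinj, e | exact ht]. }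
  nra.
Qed.

Lemma convex2_scal_comp f h c :
  convex f -> 0 <= c -> affine2 h -> convex2 (fun x y => c * f (h x y)).
Proof.
  intros hf hc hh x1 x2 y1 y2 t ht. rewrite hh.
  pose proof (hf (h x1 x2) (h y1 y2) t ht). nra.
Qed.

Lemma convex2_affine h : affine2 h -> convex2 h.
Proof. intros hh x1 x2 y1 y2 t ht. rewrite hh. lra. Qed.

Lemma convex2_plus f g : convex2 f -> convex2 g -> convex2 (fun x y => f x y + g x y).
Proof.
  intros hf hg x1 x2 y1 y2 t ht.
  pose proof (hf x1 x2 y1 y2 t ht). pose proof (hg x1 x2 y1 y2 t ht). lra.
Qed.

Lemma strictly_convex2_plus_convex2 f g :
  strictly_convex2 f -> convex2 g -> strictly_convex2 (fun x y => f x y + g x y).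
Proof.
  intros hf hg x1 x2 y1 y2 t hne ht.
  pose proof (hf x1 x2 y1 y2 t hne ht). pose proof (hg x1 x2 y1 y2 t ht). lra.
Qed.

Lemma strictly_convex2_separable f g :
  strictly_convex f -> strictly_convex g -> strictly_convex2 (fun x y => f x + g y).
Proof.
  intros hf hg x1 x2 y1 y2 t hne ht.
  pose proof (strictly_convex_convex f hf x1 y1 t ht).
  pose proof (strictly_convex_convex g hg x2 y2 t ht).
  destruct (Req_dec x1 y1) as [<- | h1].
  - assert (h2 : x2 <> y2) by (intros <-; now apply hne).
    pose proof (hg x2 y2 t h2 ht). lra.
  - pose proof (hf x1 y1 t h1 ht). lra.
Qed.

Lemma strictly_convex2_ext f g :
  (forall x y, f x y = g x y) -> strictly_convex2 f -> strictly_convex2 g.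
Proof. intros e hf x1 x2 y1 y2 t hne ht. rewrite <- !e. now apply hf. Qed.

Lemma nonincreasing_of_derive_nonpos f df :
  (forall x, is_derive f x (df x)) -> (forall x, df x <= 0) ->
  forall s t, s <= t -> f t <= f s.
Proof.
  intros hf hdf s t hst.
  destruct (Rle_lt_or_eq_dec s t hst) as [hlt | <-]; [| lra].
  destruct (MVT_is_derive f df s t hf hlt) as [c [_ e]].
  pose proof (hdf c). nra.
Qed.

Lemma lam_pos rho m : 0 < rho -> 0 < m -> 0 < lam rho m.
Proof. intros; apply sqrt_lt_R0, Rdiv_lt_0_compat; assumption. Qed.

Section Energy.

Variables L mp mm rhop rhom Sp Sm SI : R.

Notation E := (Ep L mp mm rhop rhom Sp Sm SI).
Notation H1 := (H1p L mp mm rhop rhom Sp Sm SI).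
Notation H2 := (H2p L mp mm rhop rhom Sp Sm SI).

Lemma is_derive_Ep_path (u v : R -> R) (t du dv : R) :
  is_derive u t du -> is_derive v t dv ->
  is_derive (fun s => E (u s) (v s)) t (- H1 (u t) (v t) * du - H2 (u t) (v t) * dv).
Proof.
  intros hu hv. unfold Ep, H1p, H2p, tanh.
  auto_derive.
  - repeat split; try (eexists; eassumption); apply cosh_pos.
  - replace (Derive (fun x => u x) t) with du by (symmetry; now apply is_derive_unique).
    replace (Derive (fun x => v x) t) with dv by (symmetry; now apply is_derive_unique).
    unfold Rdiv, Rminus. ring.
Qed.

Lemma Ep_gradient q1 q2 :
  is_derive (fun x => E x q2) q1 (- H1 q1 q2) /\ is_derive (fun y => E q1 y) q2 (- H2 q1 q2).
Proof.
  split.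
  - pose proof (is_derive_Ep_path (fun x => x) (fun _ => q2) q1 1 0
                  (is_derive_id q1) (is_derive_const q2 q1)) as h.
    replace (- H1 q1 q2) with (- H1 q1 q2 * 1 - H2 q1 q2 * 0) by ring. exact h.
  - pose proof (is_derive_Ep_path (fun _ => q1) (fun y => y) q2 0 1
                  (is_derive_const q1 q2) (is_derive_id q2)) as h.
    replace (- H2 q1 q2) with (- H1 q1 q2 * 0 - H2 q1 q2 * 1) by ring. exact h.
Qed.

Lemma Ep_nonincreasing_along_solutions (q1 q2 : R -> R) :
  (forall t, is_derive q1 t (H1 (q1 t) (q2 t))) ->
  (forall t, is_derive q2 t (H2 (q1 t) (q2 t))) ->
  forall s t, s <= t -> E (q1 t) (q2 t) <= E (q1 s) (q2 s).
Proof.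
  intros h1 h2.
  apply (nonincreasing_of_derive_nonpos _
           (fun t => - H1 (q1 t) (q2 t) * H1 (q1 t) (q2 t) - H2 (q1 t) (q2 t) * H2 (q1 t) (q2 t))).
  - intro t. now apply is_derive_Ep_path.
  - intro t. nra.
Qed.

Lemma Ep_strictly_convex :
  0 < mp -> 0 < mm -> 0 < rhop -> 0 < rhom -> Sp < 0 -> 0 < Sm -> strictly_convex2 E.
Proof.
  intros hmp hmm hrp hrm hSp hSm.
  pose proof (lam_pos rhom mm hrm hmm) as hlm.
  assert (hA : 0 < Sm / rhom * mm / 2).
  { apply Rdiv_lt_0_compat; [apply Rmult_lt_0_compat; [apply Rdiv_lt_0_compat |] |]; lra. }
  assert (hB : 0 <= - (Sp / rhop) * mp).
  { assert (Sp / rhop < 0) by (apply Rdiv_neg_pos; assumption). nra. }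
  apply strictly_convex2_ext with (fun x y =>
    (Sm / rhom * mm / 2 * ln (cosh (lam rhom mm * x))
       + Sm / rhom * mm / 2 * ln (cosh (lam rhom mm * (L - y))))
    + (- (Sp / rhop) * mp * ln (cosh (lam rhop mp * ((y - x) / 2)))
       + / 2 * SI * (x - y))).
  { intros x y. unfold Ep. ring. }
  apply strictly_convex2_plus_convex2; [apply strictly_convex2_separable | apply convex2_plus].
  - apply (strictly_convex_scal_comp (fun z => ln (cosh z)) (fun x => lam rhom mm * x));
      [exact strictly_convex_ln_cosh | exact hA | intros x y t; ring |].
    intros x y e. apply Rmult_eq_reg_l in e; lra.
  - apply (strictly_convex_scal_comp (fun z => ln (cosh z)) (fun y => lam rhom mm * (L - y)));
      [exact strictly_convex_ln_cosh | exact hA | intros x y t; ring |].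
    intros x y e. apply Rmult_eq_reg_l in e; lra.
  - apply (convex2_scal_comp (fun z => ln (cosh z)) (fun x y => lam rhop mp * ((y - x) / 2)));
      [apply strictly_convex_convex, strictly_convex_ln_cosh | exact hB |].
    intros x1 x2 y1 y2 t. field.
  - apply convex2_affine. intros x1 x2 y1 y2 t. ring.
Qed.

End Energy.

Theorem proposition4p2 (L mp mm rhop rhom Sp Sm SI : R)
  (hL : 0 < L) (hmp : 0 < mp) (hmm : 0 < mm) (hrp : 0 < rhop) (hrm : 0 < rhom)
  (hSp : Sp < 0) (hSm : 0 < Sm) :
  (* (H1p, H2p) = - grad E *)
  (forall q1 q2 : R,
      is_derive (fun x => Ep L mp mm rhop rhom Sp Sm SI x q2) q1
                (- H1p L mp mm rhop rhom Sp Sm SI q1 q2)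
   /\ is_derive (fun y => Ep L mp mm rhop rhom Sp Sm SI q1 y) q2
                (- H2p L mp mm rhop rhom Sp Sm SI q1 q2))
  (* E is strictly convex *)
  /\ strictly_convex2 (Ep L mp mm rhop rhom Sp Sm SI)
  (* E is a Lyapunov function: nonincreasing along every solution *)
  /\ (forall q1 q2 : R -> R,
        (forall t, is_derive q1 t (H1p L mp mm rhop rhom Sp Sm SI (q1 t) (q2 t))) ->
        (forall t, is_derive q2 t (H2p L mp mm rhop rhom Sp Sm SI (q1 t) (q2 t))) ->
        forall s t, s <= t ->
          Ep L mp mm rhop rhom Sp Sm SI (q1 t) (q2 t)
            <= Ep L mp mm rhop rhom Sp Sm SI (q1 s) (q2 s)).
Proof.
  split; [| split].
  - apply Ep_gradient.
  - now apply Ep_strictly_convex.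
  - apply Ep_nonincreasing_along_solutions.
Qed.
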